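(* Let $B=\prod_{i=1}^d[\alpha_i,\beta_i]$ be an axis-parallel box in $\mathbb{R}^d$, let $\lambda$ be a vertex of $B$, and let $B',B''$ be axis-parallel boxes in $\mathbb{R}^d$ with $\lambda\in B'$ and $\lambda\notin B''$. Then there exists a face $F$ of $B$ with $F\cap B''=\emptyset$ and $F\cap B'\neq\emptyset$.
   Context: For a box $B=[\alpha_1,\beta_1]\times\dots\times[\alpha_d,\beta_d]$: a vertex is a point $(\lambda_1,\dots,\lambda_d)$ with $\lambda_j\in\{\alpha_j,\beta_j\}$ for all $j$; a face of $B$ is a set of the form $B\cap\{x: x_j=\alpha_j\}$ or $B\cap\{x:x_j=\beta_j\}$ for some $j\in[d]$. *)

From mathcomp Require Import all_boot all_order all_algebra.
Set Implicit Arguments. Unset Strict Implicit. Unset Printing Implicit Defensive.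
Import Order.TTheory GRing.Theory Num.Theory.
Local Open Scope ring_scope.

Section Boxes.
Variables (R : realFieldType) (d : nat).

Definition box (a b : 'I_d -> R) : ('I_d -> R) -> Prop :=
  fun x => forall i, a i <= x i <= b i.

Definition box_wf (a b : 'I_d -> R) : Prop := forall i, a i <= b i.

Definition is_vertex (a b : 'I_d -> R) (l : 'I_d -> R) : Prop :=
  forall j, l j = a j \/ l j = b j.

Definition is_face (a b : 'I_d -> R) (F : ('I_d -> R) -> Prop) : Prop :=
  exists j : 'I_d,
    F = (fun x => box a b x /\ x j = a j) \/
    F = (fun x => box a b x /\ x j = b j).
End Boxes.

(* The vertex λ lies in B, and since λ ∉ B'' some coordinate λ_j falls outside
   the j-th side of B''.  The face of B through λ cut out by x_j = λ_j then
   misses B'' and meets B' at λ itself. *)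
From mathcomp Require Import all_boot all_order all_algebra.
Import Order.TTheory GRing.Theory Num.Theory.
Local Open Scope ring_scope.

Section BoxFaces.
Context {R : realFieldType} {d : nat}.
Implicit Types (a b x l : 'I_d -> R).

Lemma vertex_in_box a b l : box_wf a b -> is_vertex a b l -> box a b l.
Proof. by move=> wf hv i; case: (hv i) => ->; rewrite lexx ?wf. Qed.

Lemma not_box_coord {a b x} :
  ~ box a b x -> exists j, ~~ (a j <= x j <= b j).
Proof. by move=> nB; apply/existsP/negP => /forallP inB; apply: nB. Qed.

Lemma is_face_vertex_slice a b l (j : 'I_d) :
  is_vertex a b l -> is_face a b (fun x => box a b x /\ x j = l j).
Proof. by move=> hv; exists j; case: (hv j) => ->; [left | right]. Qed.

End BoxFaces.

Theorem lemma4 (R : realFieldType) (d : nat)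
    (a b a1 b1 a2 b2 lam : 'I_d -> R) :
  box_wf a b -> box_wf a1 b1 -> box_wf a2 b2 ->
  is_vertex a b lam ->
  box a1 b1 lam -> ~ box a2 b2 lam ->
  exists F : ('I_d -> R) -> Prop,
    is_face a b F /\
    (forall x, F x -> ~ box a2 b2 x) /\
    (exists x, F x /\ box a1 b1 x).
Proof.
move=> wf _ _ hv lamB1 lamNB2.
have [j lamNj] := not_box_coord lamNB2.
exists (fun x => box a b x /\ x j = lam j); split; last split.
- exact: is_face_vertex_slice.
- by move=> x [_ xj] /(_ j); rewrite xj; apply/negP.
- by exists lam; do !split; first exact: vertex_in_box.
Qed.
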